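(* Let $M$ be a finite set of alternatives, $\mathcal{R}$ the set of weak preference orders on $M$, and $\varphi:\mathcal{R}\to\Delta(M)$ a mechanism. If $\varphi$ is multi-separation strategyproof, then it is strategyproof.
   Context: A preference order is a complete, transitive relation $R$ on $M$; $a\,I\,b$ means $a\,R\,b$ and $b\,R\,a$; $a\,P\,b$ means $a\,R\,b$ and not $b\,R\,a$. Write $R$ as $M_1\,P\,\cdots\,P\,M_K$ where $(M_k)$ are the nonempty indifference classes ordered so that $a\,P\,b$ for $a\in M_k$, $b\in M_{k'}$, $k<k'$. A lottery $x\in\Delta(M)$ first order-stochastically dominates $y$ at $R$ if $\sum_{j: j R a}x_j\ge\sum_{j: j R a}y_j$ for all $a\in M$. $\varphi$ is strategyproof if $\varphi(R)$ first order-stochastically dominates $\varphi(R')$ at $R$ for all $R,R'\in\mathcal{R}$. A multi-separation is a pair $(R,R')$ such that, with $R=M_1\,P\,\cdots\,P\,M_K$, there are integers $L_1,\dots,L_K\ge1$ and, for each $k$, a partition of $M_k$ into pairwise disjoint nonempty sets $M_k^1,\dots,M_k^{L_k}$ with $R'=M_1^1\,P'\,\cdots\,P'\,M_1^{L_1}\,P'\,M_2^1\,P'\,\cdots\,P'\,M_K^1\,P'\,\cdots\,P'\,M_K^{L_K}$ (indifference within each listed set). $\varphi$ is multi-separation strategyproof if for every multi-separation $(R,R')$, $\varphi(R)$ first order-stochastically dominates $\varphi(R')$ at $R$ and $\varphi(R')$ first order-stochastically dominates $\varphi(R)$ at $R'$. *)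

From mathcomp Require Import all_boot all_order all_algebra.
Set Implicit Arguments. Unset Strict Implicit. Unset Printing Implicit Defensive.
Import Order.TTheory GRing.Theory Num.Theory.
Local Open Scope ring_scope.

(* A preference order: complete and transitive relation on M.
   [R a b] means "a is weakly preferred to b". *)
Definition complete (M : finType) (R : rel M) : Prop := forall a b, R a b || R b a.
Definition transitive_rel (M : finType) (R : rel M) : Prop :=
  forall a b c, R a b -> R b c -> R a c.
Definition pref_order (M : finType) (R : rel M) : Prop :=
  complete R /\ transitive_rel R.

Definition lottery (T : realFieldType) (M : finType) (x : {ffun M -> T}) : Prop :=
  (forall j, 0 <= x j) /\ \sum_(j : M) x j = 1.

Definition fosd (T : realFieldType) (M : finType) (R : rel M)
    (x y : {ffun M -> T}) : Prop :=
  forall a : M, \sum_(j : M | R j a) y j <= \sum_(j : M | R j a) x j.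

(* A mechanism phi : preference orders -> lotteries.  It is represented as a
   function on all relations, required to return lotteries on preference orders. *)
Definition mechanism (T : realFieldType) (M : finType) (phi : rel M -> {ffun M -> T}) : Prop :=
  forall R, pref_order R -> lottery (phi R).

Definition strategyproof (T : realFieldType) (M : finType) (phi : rel M -> {ffun M -> T}) : Prop :=
  forall R R', pref_order R -> pref_order R' -> fosd R (phi R) (phi R').

(* (R, R') is a multi-separation: R = M_1 P ... P M_K with indifference class
   index k (a R b iff k a <= k b, M_1 the top class), and R' splits each class
   M_k into sub-blocks indexed by l, ordered lexicographically. *)
Definition multi_separation (M : finType) (R R' : rel M) : Prop :=
  exists (k l : M -> nat),
    (forall a b, R a b = (k a <= k b)%N) /\
    (forall a b, R' a b = ((k a < k b)%N || ((k a == k b) && (l a <= l b)%N))).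

Definition ms_strategyproof (T : realFieldType) (M : finType) (phi : rel M -> {ffun M -> T}) : Prop :=
  forall R R', pref_order R -> pref_order R' -> multi_separation R R' ->
    fosd R (phi R) (phi R') /\ fosd R' (phi R') (phi R).

From mathcomp Require Import all_boot all_order all_algebra.
From mathcomp Require Import zify lra.
Set Implicit Arguments. Unset Strict Implicit. Unset Printing Implicit Defensive.
Import Order.TTheory GRing.Theory Num.Theory.
Local Open Scope ring_scope.

(* Let f(V) be the probability that phi assigns to V when V is reported as the
   top indifference class above all other alternatives ([dich_mass]).  Every
   preference in which V is an upper set is a multi-separation of that
   dichotomous report, so phi gives V probability f(V) at all of them.
   Comparing the report A∩B | A∆B | rest with its two splittings of the middle
   class shows that f is submodular.
   Now let U be an upper set of R, let L_t be the indifference classes of R'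
   and W_t the union of the classes above L_t.  Splitting L_t with U∩L_t on top
   shows that phi(R') gives U∩L_t at most f(W_t ∪ (U∩L_t)) - f(W_t), which
   submodularity bounds by f(U∩W_(t+1)) - f(U∩W_t).  These increments
   telescope to f(U), the probability that phi(R) gives U. *)

Section PreferenceOrders.
Variable M : finType.

Definition rank (Y : rel M) (b : M) : nat := #|[pred i | Y i b]|.

Definition rank_order (k : M -> nat) : rel M := fun a b => (k a <= k b)%N.

Definition lex_order (k l : M -> nat) : rel M :=
  fun a b => (k a < k b)%N || ((k a == k b) && (l a <= l b)%N).

(* V is the top indifference class and its complement the bottom one. *)
Definition dichotomy (V : pred M) : rel M := rank_order (fun j => ~~ V j : nat).

Definition upper_set (Y : rel M) (V : pred M) : Prop :=
  forall i j, V j -> Y i j -> V i.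

Lemma pref_order_rankE (Y : rel M) :
  pref_order Y -> forall a b, Y a b = (rank Y a <= rank Y b)%N.
Proof.
move=> [co tr] a b.
have refl c : Y c c by have := co c c; rewrite orbb.
case hab: (Y a b).
  apply/esym/subset_leq_card/subsetP => i; rewrite !inE => h.
  exact: tr h hab.
have hba : Y b a by have := co a b; rewrite hab.
apply/esym/negbTE; rewrite -ltnNge; apply/proper_card/properP; split.
  by apply/subsetP => i; rewrite !inE => h; exact: tr h hba.
by exists a; rewrite !inE ?refl ?hab.
Qed.

Lemma pref_order_rank_order (k : M -> nat) : pref_order (rank_order k).
Proof. by split=> [a b | a b c]; rewrite /rank_order; lia. Qed.

Lemma pref_order_lex_order (k l : M -> nat) : pref_order (lex_order k l).
Proof. by split=> [a b | a b c]; rewrite /lex_order; lia. Qed.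

Lemma multi_separation_lex_order (R : rel M) (k l : M -> nat) :
  (forall a b, R a b = (k a <= k b)%N) -> multi_separation R (lex_order k l).
Proof. by move=> hR; exists k, l. Qed.

Lemma multi_separation_subrel (R R' : rel M) :
  multi_separation R R' -> forall a b, R' a b -> R a b.
Proof. by move=> [k [l [hR hR']]] a b; rewrite hR hR'; lia. Qed.

Lemma multi_separation_dichotomy (Y : rel M) (V : pred M) :
  pref_order Y -> upper_set Y V -> multi_separation (dichotomy V) Y.
Proof.
move=> pY upV; exists (fun j => ~~ V j : nat), (rank Y); split=> // a b.
rewrite -(pref_order_rankE pY).
case Va: (V a); case Vb: (V b) => //=.
  by have [co _] := pY; case/orP: (co a b) => // /(upV _ _ Va); rewrite Vb.
by apply/negbTE/negP => /(upV _ _ Vb); rewrite Va.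
Qed.

End PreferenceOrders.

Section Mass.
Variables (T : realFieldType) (M : finType).
Implicit Types (x z : {ffun M -> T}) (V : pred M).

Definition mass x V : T := \sum_(j | V j) x j.

Lemma mass_pred0 x V : (forall j, ~~ V j) -> mass x V = 0.
Proof. by move=> V0; apply: big_pred0 => j; apply/negbTE. Qed.

Lemma mass_predU_predI x (A B U I : pred M) :
  (forall j, U j = A j || B j) -> (forall j, I j = A j && B j) ->
  mass x U + mass x I = mass x A + mass x B.
Proof.
move=> hU hI; rewrite /mass (bigID B U) (bigID B A) /=.
have -> : \sum_(j | U j && B j) x j = \sum_(j | B j) x j.
  by apply: eq_bigl => j; rewrite hU; case: (A j); case: (B j).
have -> : \sum_(j | U j && ~~ B j) x j = \sum_(j | A j && ~~ B j) x j.
  by apply: eq_bigl => j; rewrite hU; case: (A j); case: (B j).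
have -> : \sum_(j | A j && B j) x j = \sum_(j | I j) x j.
  by apply: eq_bigl => j; rewrite hI.
lra.
Qed.

Lemma mass_predU x (A B U : pred M) :
  (forall j, U j = A j || B j) -> (forall j, ~~ (A j && B j)) ->
  mass x U = mass x A + mass x B.
Proof.
move=> hU dAB; rewrite /mass (bigID A U) /=.
by congr (_ + _); apply: eq_bigl => j;
  move: (dAB j); rewrite hU; case: (A j); case: (B j).
Qed.

Lemma fosd_mass_upper (Y : rel M) x z V :
  pref_order Y -> fosd Y x z -> upper_set Y V -> mass z V <= mass x V.
Proof.
move=> pY hxz upV.
case: (pickP V) => [v Vv | V0]; last by rewrite !mass_pred0 // => j; rewrite V0.
have [b Vb bmax] := @arg_maxnP M v V (rank Y) Vv.
have eV j : V j = Y j b.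
  apply/idP/idP => [Vj | Yjb]; last exact: upV Yjb.
  by rewrite (pref_order_rankE pY); apply: bmax.
by rewrite /mass !(eq_bigl _ _ eV); apply: hxz.
Qed.

End Mass.

Section MultiSeparationStrategyproof.
Variables (T : realFieldType) (M : finType) (phi : rel M -> {ffun M -> T}).
Hypothesis ms : ms_strategyproof phi.

Lemma ms_mass_eq (R R' : rel M) (V : pred M) :
  pref_order R -> pref_order R' -> multi_separation R R' -> upper_set R V ->
  mass (phi R') V = mass (phi R) V.
Proof.
move=> pR pR' sep upV; have [hR hR'] := ms pR pR' sep.
apply/le_anti/andP; split; first exact: fosd_mass_upper hR upV.
apply: fosd_mass_upper hR' _ => // i j Vj /(multi_separation_subrel sep).
exact: upV.
Qed.

Lemma ms_mass_le (R R' : rel M) (V : pred M) :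
  pref_order R -> pref_order R' -> multi_separation R R' -> upper_set R' V ->
  mass (phi R) V <= mass (phi R') V.
Proof. by move=> pR pR' sep; have [_ hR'] := ms pR pR' sep; apply: fosd_mass_upper. Qed.

Definition dich_mass (V : pred M) : T := mass (phi (dichotomy V)) V.

Lemma mass_upper_set (Y : rel M) (V : pred M) :
  pref_order Y -> upper_set Y V -> mass (phi Y) V = dich_mass V.
Proof.
move=> pY upV; apply: ms_mass_eq => //; first exact: pref_order_rank_order.
  exact: multi_separation_dichotomy.
by move=> i j Vj; rewrite /dichotomy /rank_order Vj; case: (V i).
Qed.

Lemma eq_dich_mass (V1 V2 : pred M) : V1 =1 V2 -> dich_mass V1 = dich_mass V2.
Proof.
move=> eV; rewrite -(@mass_upper_set (dichotomy V2)); last first.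
- by move=> i j; rewrite /dichotomy /rank_order !eV => ->; case: (V2 i).
- exact: pref_order_rank_order.
by apply: eq_bigl.
Qed.

Lemma dich_mass_submodular (A B U I : pred M) :
  (forall j, U j = A j || B j) -> (forall j, I j = A j && B j) ->
  dich_mass U + dich_mass I <= dich_mass A + dich_mass B.
Proof.
move=> hU hI.
pose k j := (if A j && B j then 0 else if A j || B j then 1 else 2)%N.
pose X := rank_order k.
pose YA := lex_order k (fun j => ~~ A j : nat).
pose YB := lex_order k (fun j => ~~ B j : nat).
have pX : pref_order X by exact: pref_order_rank_order.
have sepA : multi_separation X YA by exact: multi_separation_lex_order.
have sepB : multi_separation X YB by exact: multi_separation_lex_order.
have upU : upper_set X U.
  move=> i j; rewrite /X /rank_order /k !hU.
  by case: (A i); case: (B i); case: (A j); case: (B j).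
have upI : upper_set X I.
  move=> i j; rewrite /X /rank_order /k !hI.
  by case: (A i); case: (B i); case: (A j); case: (B j).
have upA : upper_set YA A.
  move=> i j; rewrite /YA /lex_order /k.
  by case: (A i); case: (B i); case: (A j); case: (B j).
have upB : upper_set YB B.
  move=> i j; rewrite /YB /lex_order /k.
  by case: (A i); case: (B i); case: (A j); case: (B j).
have leA := ms_mass_le pX (pref_order_lex_order _ _) sepA upA.
have leB := ms_mass_le pX (pref_order_lex_order _ _) sepB upB.
rewrite -(mass_upper_set pX upU) -(mass_upper_set pX upI).
rewrite -(mass_upper_set (pref_order_lex_order _ _) upA).
rewrite -(mass_upper_set (pref_order_lex_order _ _) upB).
by rewrite (mass_predU_predI _ hU hI) lerD.
Qed.

Lemma level_mass_le (Y : rel M) (U : pred M) (t : nat) :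
  pref_order Y ->
  mass (phi Y) (fun j => U j && (rank Y j == t)) <=
    dich_mass (fun j => U j && (rank Y j < t.+1)%N) -
    dich_mass (fun j => U j && (rank Y j < t)%N).
Proof.
move=> pY; set r := rank Y.
pose W j := (r j < t)%N.
pose L j := U j && (r j == t).
pose WL j := W j || L j.
pose Y1 := lex_order r (fun j => ~~ U j : nat).
have pY1 : pref_order Y1 by exact: pref_order_lex_order.
have sep : multi_separation Y Y1.
  exact/multi_separation_lex_order/(pref_order_rankE pY).
have upW : upper_set Y W by move=> i j; rewrite /W (pref_order_rankE pY) -/r; lia.
have upWL : upper_set Y1 WL.
  by move=> i j; rewrite /WL /W /L /Y1 /lex_order; case: (U i); case: (U j) => /=; lia.
have leWL : mass (phi Y) WL <= dich_mass WL.
  by rewrite -(mass_upper_set pY1 upWL); apply: ms_mass_le sep upWL.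
have splitWL : mass (phi Y) WL = mass (phi Y) W + mass (phi Y) L.
  by apply: mass_predU => // j; rewrite /W /L; case: (U j) => /=; lia.
have submod : dich_mass WL + dich_mass (fun j => U j && (r j < t)%N) <=
              dich_mass W + dich_mass (fun j => U j && (r j < t.+1)%N).
  by apply: dich_mass_submodular => j; rewrite /WL /W /L; case: (U j) => /=; lia.
rewrite -(mass_upper_set pY upW) in submod; lra.
Qed.

Lemma mass_le_dich_mass (Y : rel M) (V : pred M) :
  pref_order Y -> mass (phi Y) V <= dich_mass V.
Proof.
move=> pY; set n := #|M|.+1.
have rank_lt j : (rank Y j < n)%N by rewrite ltnS /rank max_card.
pose g t := dich_mass (fun j => V j && (rank Y j < t)%N).
have g0 : g 0%N = 0.
  rewrite /g (@eq_dich_mass _ pred0) => [|j]; last by rewrite ltn0 andbF.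
  exact: mass_pred0.
have gn : g n = dich_mass V.
  by apply: eq_dich_mass => j; rewrite rank_lt andbT.
rewrite -gn -[g n]subr0 -g0 -telescope_sumr // big_mkord /mass.
rewrite (partition_big (fun j => Ordinal (rank_lt j)) predT) //=.
apply: ler_sum => t _.
by rewrite (eq_bigl (fun j => V j && (rank Y j == t))) //; apply: level_mass_le.
Qed.

End MultiSeparationStrategyproof.

Theorem lemma8 (T : realFieldType) (M : finType) (phi : rel M -> {ffun M -> T}) :
  mechanism phi -> ms_strategyproof phi -> strategyproof phi.
Proof.
move=> _ ms R R' pR pR' a.
have upR : upper_set R (fun j => R j a).
  by move=> i j Rja Rij; have [_ tr] := pR; exact: tr Rij Rja.
have := mass_le_dich_mass ms (fun j => R j a) pR'.
by rewrite -(mass_upper_set ms pR upR).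
Qed.
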